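(* Let $q$ be a prime power, $L$ an integer with $1\le L<q$, and $r\in[0,\frac{L}{L+1})$ with $rn\in\mathbb{N}$. If $C\subseteq\mathbb{F}_q^n$ is a linear $[n,k]_q$ code that is $(r,L)$ list-decodable with $k=n-\lceil\frac{L+1}{L}rn\rceil$, then $d(C)\ge n-k$. Moreover, if $L\mid rn$ then $d(C)\ge n-k+1$, i.e. $C$ is MDS.
   Context: A linear $[n,k]_q$ code is a $k$-dimensional subspace of $\mathbb{F}_q^n$; $d(C)$ is its minimum Hamming distance; MDS means $d(C)=n-k+1$. $C$ is $(r,L)$ list-decodable if every Hamming ball of radius $rn$ in $\mathbb{F}_q^n$ contains at most $L$ codewords. *)

From HB Require Import structures.
From mathcomp Require Import all_boot all_order all_algebra.
Set Implicit Arguments. Unset Strict Implicit. Unset Printing Implicit Defensive.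
Import Order.TTheory GRing.Theory Num.Theory.

Definition hdist (F : finFieldType) (n : nat) (x y : 'rV[F]_n) : nat :=
  #|[set i : 'I_n | x ord0 i != y ord0 i]|.

(* C is (r,L) list-decodable, with e = r n the (integral) radius:
   every Hamming ball of radius e contains at most L codewords. *)
Definition list_decodable (F : finFieldType) (n : nat)
    (C : {vspace 'rV[F]_n}) (e L : nat) : Prop :=
  forall y : 'rV[F]_n, #|[set c : 'rV[F]_n | (c \in C) && (hdist c y <= e)]| <= L.

Definition min_dist_ge (F : finFieldType) (n : nat)
    (C : {vspace 'rV[F]_n}) (d : nat) : Prop :=
  forall x y, x \in C -> y \in C -> x != y -> d <= hdist x y.

(* If a nonzero codeword z of weight w satisfies L w <= (L+1) e, split its
   support into L+1 parts of size at least w - e and let y agree with a_j z on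
   the j-th part, for L+1 distinct scalars a_j.  Every a_j z then lies within
   distance e of y, contradicting (e, L) list-decodability.  Hence nonzero
   codewords have weight > (L+1) e / L, and since e = r n this lower bound is
   the ceiling that defines n - k, with one extra unit when L divides e. *)

From HB Require Import structures.
From mathcomp Require Import all_boot all_order all_algebra.
From mathcomp Require Import zify.
Set Implicit Arguments.
Unset Strict Implicit.
Unset Printing Implicit Defensive.
Import Order.TTheory GRing.Theory Num.Theory.

Lemma exists_classes_card_ge (T : finType) (K d : nat) (S : {set T}) :
  (K * d <= #|S|)%N ->
  exists g : T -> nat, forall j, (j < K)%N -> (d <= #|[set x in S | g x == j]|)%N.
Proof.
elim: K S => [|K IH] S; first by exists (fun _ => 0%N).
rewrite mulSn => S_large.
have /card_geqP [s [s_uniq s_size s_sub]] : (d <= #|S|)%N by lia.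
pose A := [set x in s].
have card_A : #|A| = d by rewrite cardsE (card_uniqP s_uniq).
have sub_AS : A \subset S by apply/subsetP => x; rewrite inE => /s_sub.
have [g g_ge] : exists g : T -> nat,
    forall j, (j < K)%N -> (d <= #|[set x in S :\: A | g x == j]|)%N.
  by apply: IH; rewrite cardsD (setIidPr sub_AS) card_A; lia.
exists (fun x => if x \in A then K else g x) => j lt_jK1.
have [-> | neq_jK] := eqVneq j K.
  rewrite -card_A; apply: subset_leq_card; apply/subsetP => x xA.
  by rewrite inE xA eqxx (subsetP sub_AS _ xA).
apply: leq_trans (g_ge j _) _; first by lia.
apply: subset_leq_card; apply/subsetP => x.
by rewrite !inE => /andP [/andP [/negbTE -> ->] ->].
Qed.

Local Open Scope ring_scope.

Section HammingWeight.

Variables (F : finFieldType) (n : nat).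

Definition hweight (z : 'rV[F]_n) : nat := #|[set i | z ord0 i != 0]|.

Lemma hdist_hweight (x y : 'rV[F]_n) : hdist x y = hweight (x - y).
Proof. by apply: eq_card => i; rewrite !inE !mxE subr_eq0. Qed.

Lemma min_dist_ge_hweight (C : {vspace 'rV[F]_n}) (d : nat) :
  (forall z, z \in C -> z != 0 -> (d <= hweight z)%N) -> min_dist_ge C d.
Proof.
move=> weight_ge x y xC yC neq_xy; rewrite hdist_hweight.
by apply: weight_ge; rewrite ?memvB // subr_eq0.
Qed.

Lemma exists_center_near_scalings (K e : nat) (a : nat -> F) (z : 'rV[F]_n) :
  (K * (hweight z - e) <= hweight z)%N ->
  exists y : 'rV[F]_n, forall j, (j < K)%N -> (hdist (a j *: z) y <= e)%N.
Proof.
rewrite /hweight; set S := [set i | z ord0 i != 0] => parts_fit.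
have [g part_ge] := exists_classes_card_ge parts_fit.
exists (\row_i (a (g i) * z ord0 i)) => j lt_jK.
pose P := [set i in S | g i == j].
apply: (@leq_trans #|S :\: P|).
  apply: subset_leq_card; apply/subsetP => i; rewrite !inE !mxE.
  have [-> | nz_zi] := eqVneq (z ord0 i) 0; first by rewrite !mulr0 eqxx.
  by have [->|] := eqVneq (g i) j; rewrite ?eqxx.
have sub_PS : P \subset S by apply/subsetP => i; rewrite inE => /andP [].
by rewrite cardsD (setIidPr sub_PS); have := part_ge j lt_jK; rewrite -/P; lia.
Qed.

Lemma list_decodable_hweight_gt (C : {vspace 'rV[F]_n}) (e L : nat)
    (z : 'rV[F]_n) :
  (L < #|F|)%N -> list_decodable C e L -> z \in C -> z != 0 ->
  (L.+1 * e < L * hweight z)%N.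
Proof.
move=> lt_LF decC zC nz_z; rewrite ltnNge; apply/negP => small_z.
pose a j := nth 0 (enum F) j.
have a_inj (i j : 'I_L.+1) : a i = a j -> i = j.
  have lt_F (m : 'I_L.+1) : (m < size (enum F))%N.
    by rewrite -cardE (leq_trans (ltn_ord m) lt_LF).
  by move/eqP; rewrite /a nth_uniq ?enum_uniq ?lt_F // => /eqP /val_inj.
have [y near_y] : exists y : 'rV[F]_n,
    forall j, (j < L.+1)%N -> (hdist (a j *: z) y <= e)%N.
  by apply: exists_center_near_scalings; lia.
pose f (j : 'I_L.+1) := a j *: z.
have f_inj : injective f.
  move=> i j /eqP; rewrite /f -subr_eq0 -scalerBl scaler_eq0 (negbTE nz_z).
  by rewrite orbF subr_eq0 => /eqP /a_inj.
suff : (L.+1 <= #|[set c | (c \in C) && (hdist c y <= e)%N]|)%N.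
  by move/leq_trans/(_ (decC y)); rewrite ltnn.
rewrite -[X in (X <= _)%N](card_ord L.+1) -(card_imset _ f_inj).
apply: subset_leq_card; apply/subsetP => _ /imsetP [j _ ->].
by rewrite inE memvZ // near_y.
Qed.

End HammingWeight.

Section CeilRatio.

Variable R : archiRealFieldType.

Lemma ceil_ratio_le (a b w : nat) :
  (0 < b)%N -> (a <= b * w)%N -> Num.ceil (a%:R / b%:R : R) <= w%:Z.
Proof.
move=> b_gt0 le_a.
by rewrite ceil_le_int ler_pdivrMr ?ltr0n // -natrM ler_nat mulnC.
Qed.

Lemma ceil_ratio_dvd (a b : nat) :
  (0 < b)%N -> (b %| a)%N -> Num.ceil (a%:R / b%:R : R) = (a %/ b)%:Z.
Proof.
move=> b_gt0 /divnK def_a.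
rewrite -{1}def_a natrM mulfK ?pnatr_eq0 -?lt0n //.
by rewrite -[_%:R]/((Posz _)%:~R) intrKceil.
Qed.

End CeilRatio.

Theorem corollary6p5 (F : finFieldType) (n L k e : nat) (r : rat)
    (C : {vspace 'rV[F]_n}) :
  (1 <= L)%N -> (L < #|F|)%N ->
  (0 <= r)%R -> (r < (L%:R / (L.+1)%:R))%R ->
  (r * n%:R = e%:R)%R ->
  \dim C = k ->
  (k%:Z = n%:Z - Num.ceil ((L.+1)%:R / L%:R * r * n%:R))%R ->
  list_decodable C e L ->
  min_dist_ge C (n - k) /\ ((L %| e)%N -> min_dist_ge C (n - k + 1)).
Proof.
move=> L_gt0 lt_LF _ _ def_e _ def_k decC.
rewrite -mulrA def_e mulrAC -natrM in def_k.
set c := Num.ceil _ in def_k.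
have c_ge0 : 0 <= c.
  by rewrite ceil_ge0 (lt_le_trans _ (divr_ge0 (ler0n _ _) (ler0n _ _))).
have weight_gt := list_decodable_hweight_gt lt_LF decC.
split=> [|dvd_Le]; apply: min_dist_ge_hweight => z zC nz_z.
  have : c <= hweight z by apply/ceil_ratio_le/ltnW/weight_gt.
  lia.
have : c = ((L.+1 * e) %/ L)%:Z by apply/ceil_ratio_dvd/dvdn_mull.
have := weight_gt z zC nz_z; rewrite [(L * _)%N]mulnC -ltn_divLR //.
move: (_ %/ L)%N => q; lia.
Qed.
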